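(* Let $G$ be a group with identity $\mathbf{1}$, $S\subseteq G$ inverse-closed, and $X=\mathrm{Cay}(G;S)$. If the group $\mathcal{A}^0_{\mathbf{1}}(X)$ of colour-preserving automorphisms of $X$ fixing $\mathbf{1}$ is trivial (equivalently, every colour-preserving automorphism of $X$ is a left translation $x\mapsto gx$), then $X$ is strongly CCA.
   Context: Graphs are simple (possibly infinite). For an inverse-closed subset $S$ of a group $G$, $\mathrm{Cay}(G;S)$ has vertex set $G$ and an edge from $g$ to $gs$ for each $g\in G$, $s\in S$; the edge $g$—$gs$ is coloured $\{s,s^{-1}\}$. A graph automorphism is colour-preserving if it maps every edge to an edge of the same colour, and colour-permuting if whenever two edges have the same colour their images also have the same colour. A map $\varphi\colon G\to G$ is affine if $\varphi(x)=\alpha(gx)$ for some $\alpha\in\mathrm{Aut}(G)$, $g\in G$. $\mathrm{Cay}(G;S)$ is strongly CCA if every colour-permuting automorphism of it is affine. *)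

From mathcomp Require Import ssreflect ssrfun ssrbool.

Set Implicit Arguments.
Unset Strict Implicit.

Record is_group (G : Type) (mul : G -> G -> G) (one : G) (inv : G -> G) : Prop :=
  IsGroup {
    mulA : forall x y z, mul x (mul y z) = mul (mul x y) z;
    mul1g : forall x, mul one x = x;
    mulg1 : forall x, mul x one = x;
    mulVg : forall x, mul (inv x) x = one;
    mulgV : forall x, mul x (inv x) = one
  }.

Section Cayley.
Variables (G : Type) (mul : G -> G -> G) (one : G) (inv : G -> G).
Variable S : G -> Prop.

Definition inverse_closed : Prop := forall s, S s -> S (inv s).

Definition cay_adj (x y : G) : Prop := exists2 s, S s & y = mul x s.

Definition edge_colour (x y : G) : G -> Prop :=
  fun s => s = mul (inv x) y \/ s = mul (inv y) x.

Definition same_colour (x y u v : G) : Prop :=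
  forall s, edge_colour x y s <-> edge_colour u v s.

Definition cay_automorphism (f : G -> G) : Prop :=
  bijective f /\ forall x y, cay_adj x y <-> cay_adj (f x) (f y).

Definition colour_preserving (f : G -> G) : Prop :=
  cay_automorphism f /\
  forall x y, cay_adj x y -> same_colour x y (f x) (f y).

Definition colour_permuting (f : G -> G) : Prop :=
  cay_automorphism f /\
  forall x y u v, cay_adj x y -> cay_adj u v -> same_colour x y u v ->
    same_colour (f x) (f y) (f u) (f v).

Definition group_automorphism (a : G -> G) : Prop :=
  bijective a /\ forall x y, a (mul x y) = mul (a x) (a y).

Definition affine (f : G -> G) : Prop :=
  exists a g, group_automorphism a /\ forall x, f x = a (mul g x).

Definition A0_one_trivial : Prop :=
  forall f, colour_preserving f -> f one = one -> forall x, f x = x.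

Definition strongly_CCA : Prop :=
  forall f, colour_permuting f -> affine f.
End Cayley.

(* The conjugate f L_g f^-1 of a left translation L_g by a colour-permuting
   automorphism f is colour-preserving.  When the stabiliser of 1 in the
   colour-preserving group is trivial, every colour-preserving automorphism is
   a left translation, so f (g x) = f g (f 1)^-1 f x for all g, x.  Hence
   x |-> (f 1)^-1 f x is a group automorphism, and f is affine. *)
From mathcomp Require Import ssreflect ssrfun ssrbool.

Section Group.
Context {G : Type} {mul : G -> G -> G} {one : G} {inv : G -> G}.
Hypothesis gG : is_group mul one inv.

Lemma mulKg x y : mul (inv x) (mul x y) = y.
Proof. by rewrite (mulA gG) (mulVg gG) (mul1g gG). Qed.

Lemma mulKVg x y : mul x (mul (inv x) y) = y.
Proof. by rewrite (mulA gG) (mulgV gG) (mul1g gG). Qed.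

Lemma mulg_injl h : injective (mul h).
Proof. by move=> x y Exy; rewrite -(mulKg h x) Exy mulKg. Qed.

Lemma invgM x y : inv (mul x y) = mul (inv y) (inv x).
Proof.
apply: (mulg_injl (mul x y)); rewrite (mulgV gG) -(mulA gG).
by rewrite mulKVg (mulgV gG).
Qed.

Lemma mulg_bij h : bijective (mul h).
Proof. by exists (mul (inv h)) => x; rewrite ?mulKg ?mulKVg. Qed.

Lemma affine_of_twisted_morph (f : G -> G) :
  bijective f ->
  (forall g x, f (mul g x) = mul (mul (f g) (inv (f one))) (f x)) ->
  affine mul f.
Proof.
move=> fbij fM; set p := f one.
pose a x := mul (inv p) (f x).
have aM x y : a (mul x y) = mul (a x) (a y).
  by rewrite /a fM -!(mulA gG).
have abij : bijective a by apply: bij_comp => //; apply: mulg_bij.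
have [ainv _ Ka] := abij.
exists a, (ainv p); split=> // x.
by rewrite aM Ka /a mulKVg.
Qed.

Section Cayley.
Context {S : G -> Prop}.

Lemma cay_adj_mull h x y :
  cay_adj mul S (mul h x) (mul h y) <-> cay_adj mul S x y.
Proof.
split=> -[s Ss Exy]; exists s => //.
  by apply: (mulg_injl h); rewrite Exy (mulA gG).
by rewrite Exy (mulA gG).
Qed.

Lemma same_colour_mull h x y :
  same_colour mul inv x y (mul h x) (mul h y).
Proof.
have invMmul u v : mul (inv (mul h u)) (mul h v) = mul (inv u) v.
  by rewrite invgM -(mulA gG) mulKg.
by move=> s; rewrite /edge_colour !invMmul.
Qed.

Lemma colour_preserving_mull h : colour_preserving mul inv S (mul h).
Proof.
split; last by move=> x y _; apply: same_colour_mull.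
by split; [apply: mulg_bij | move=> x y; apply: iff_sym; apply: cay_adj_mull].
Qed.

Lemma same_colour_trans x y u v w z :
  same_colour mul inv x y u v -> same_colour mul inv u v w z ->
  same_colour mul inv x y w z.
Proof. by move=> E1 E2 s; apply: iff_trans (E1 s) (E2 s). Qed.

Lemma cay_automorphism_comp f h :
  cay_automorphism mul S f -> cay_automorphism mul S h ->
  cay_automorphism mul S (f \o h).
Proof.
move=> [fbij fadj] [hbij hadj]; split; first exact: bij_comp.
by move=> x y; apply: iff_trans (hadj x y) (fadj _ _).
Qed.

Lemma cay_automorphism_inv f finv :
  cay_automorphism mul S f -> cancel f finv -> cancel finv f ->
  cay_automorphism mul S finv.
Proof.
move=> [_ fadj] fK Kf; split; first by exists f.
by move=> x y; have := fadj (finv x) (finv y); rewrite !Kf; apply: iff_sym.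
Qed.

Lemma colour_preserving_comp f h :
  colour_preserving mul inv S f -> colour_preserving mul inv S h ->
  colour_preserving mul inv S (f \o h).
Proof.
move=> [fA fcol] [hA hcol]; split; first exact: cay_automorphism_comp.
move=> x y xy; have hxy := proj1 (proj2 hA x y) xy.
exact: same_colour_trans (hcol x y xy) (fcol _ _ hxy).
Qed.

Lemma colour_preserving_conj f finv phi :
  colour_permuting mul inv S f -> cancel f finv -> cancel finv f ->
  colour_preserving mul inv S phi ->
  colour_preserving mul inv S (f \o phi \o finv).
Proof.
move=> [fA fcol] fK Kf [phiA phicol]; split.
  apply: cay_automorphism_comp (cay_automorphism_inv _ _ fA fK Kf).
  exact: cay_automorphism_comp.
move=> x y xy.
have xy' := proj1 (proj2 (cay_automorphism_inv _ _ fA fK Kf) x y) xy.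
have := fcol _ _ _ _ xy' (proj1 (proj2 phiA _ _) xy') (phicol _ _ xy').
by rewrite !Kf.
Qed.

Lemma colour_preserving_translation phi :
  A0_one_trivial mul one inv S -> colour_preserving mul inv S phi ->
  forall x, phi x = mul (phi one) x.
Proof.
move=> A0 phiP x.
have psiP :=
  colour_preserving_comp _ _ (colour_preserving_mull (inv (phi one))) phiP.
have psi1 : (mul (inv (phi one)) \o phi) one = one by rewrite /= (mulVg gG).
by rewrite -[in RHS](A0 _ psiP psi1 x) /= mulKVg.
Qed.

Lemma colour_permuting_twisted_morph f :
  A0_one_trivial mul one inv S -> colour_permuting mul inv S f ->
  forall g x, f (mul g x) = mul (mul (f g) (inv (f one))) (f x).
Proof.
move=> A0 fP g x; have [[[finv fK Kf] _] _] := fP.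
have conjP := colour_preserving_conj _ _ _ fP fK Kf (colour_preserving_mull g).
have transl y : f (mul g (finv y)) = mul (f (mul g (finv one))) y.
  exact: colour_preserving_translation _ A0 conjP y.
have fgc : f (mul g (finv one)) = mul (f g) (inv (f one)).
  have := transl (f one); rewrite fK (mulg1 gG) => ->.
  by rewrite -(mulA gG) (mulgV gG) (mulg1 gG).
by rewrite -{1}(fK x) transl fgc.
Qed.

End Cayley.

End Group.

Theorem corollary4p7 (G : Type) (mul : G -> G -> G) (one : G) (inv : G -> G)
  (S : G -> Prop) :
  is_group mul one inv ->
  inverse_closed inv S ->
  A0_one_trivial mul one inv S ->
  strongly_CCA mul inv S.
Proof.
move=> gG _ A0 f fP.
apply: (affine_of_twisted_morph gG f _ (colour_permuting_twisted_morph gG f A0 fP)).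
by case: fP => -[].
Qed.
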